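(* Let $0<e_0\le1$. For the problem $P_m, e_{i,k}\ge e_0\mid\mid C_{\max}$, every list schedule (LS) satisfies $\frac{C_{\max}(LS)}{C^*_{\max}}\le 1+\frac{1}{e_0}$, where $C^*_{\max}$ is the optimal makespan.
   Context: Shared-processing parallel machine scheduling: $m$ identical machines $M_1,\dots,M_m$, $n$ primary jobs available at time $0$ with processing times $p_j>0$, each processed without interruption on one machine, jobs on a machine processed one after another. The time axis of machine $M_i$ is partitioned into consecutive intervals $(0,t_{i,1}],(t_{i,1},t_{i,2}],\dots$ with sharing ratios $e_{i,k}\in(0,1]$; during the $k$-th interval $M_i$ processes primary work at rate $e_{i,k}$. In $P_m, e_{i,k}\ge e_0\mid\mid C_{\max}$ all sharing ratios satisfy $e_{i,k}\ge e_0$ and the objective is the makespan $C_{\max}=\max_j C_j$. List Scheduling (LS): given an arbitrary ordered list of the jobs, the jobs are scheduled one by one in list order, each assigned to a machine that becomes available (finishes its currently assigned jobs) earliest, starting at that time. *)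

From HB Require Import structures.
From mathcomp Require Import all_boot all_order all_algebra.
Set Implicit Arguments. Unset Strict Implicit. Unset Printing Implicit Defensive.
Import Order.TTheory GRing.Theory Num.Theory.
Local Open Scope ring_scope.

Section Defs.
Variable R : realFieldType.

Definition overlap (a b c d : R) : R :=
  Num.max 0 (Num.min b d - Num.max a c).

(* A sharing-ratio profile of one machine: breakpoints t 0 = 0 < t 1 < t 2 < ...
   (unbounded), the k-th interval is (t k, t k.+1] and has sharing ratio e k,
   with e0 <= e k <= 1. *)
Definition valid_profile (e0 : R) (t : nat -> R) (e : nat -> R) : Prop :=
  [/\ t 0%N = 0,
      (forall k, t k < t k.+1),
      (forall x : R, exists k, x <= t k) &
      (forall k, e0 <= e k <= 1)].

(* [work_on t e a b w]: the amount of primary work the machine with profile (t,e)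
   processes during (a,b] is w, i.e. w = \int_a^b rate, computed as the finite sum
   over all intervals (t k, t k.+1] (with k < N, where t N >= b, so all further
   terms vanish). *)
Definition work_on (t e : nat -> R) (a b w : R) : Prop :=
  exists N : nat, b <= t N /\
    w = \sum_(k < N) e k * overlap a b (t k) (t k.+1).

(* A (non-preemptive) schedule: job j is processed on machine [asg j],
   starting at [S j] and completing at [C j]. *)
Definition feasible (m n : nat) (t e : 'I_m -> nat -> R) (p : 'I_n -> R)
    (asg : 'I_n -> 'I_m) (S C : 'I_n -> R) : Prop :=
  (forall j, 0 <= S j /\ S j <= C j /\ work_on (t (asg j)) (e (asg j)) (S j) (C j) (p j))
  /\ (forall j j', j != j' -> asg j = asg j' -> C j <= S j' \/ C j' <= S j).

Definition makespan (n : nat) (C : 'I_n -> R) : R := \big[Num.max/0]_(j < n) C j.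

Definition avail (m n : nat) (asg : 'I_n -> 'I_m) (C : 'I_n -> R)
    (s : seq 'I_n) (i : 'I_m) : R :=
  \big[Num.max/0]_(j' <- s | asg j' == i) C j'.

(* (asg,S,C) is a schedule produced by List Scheduling with list L
   (any tie-breaking): jobs are taken in list order, each assigned to a machine
   that becomes available earliest given the previously scheduled jobs, starting
   at that time, and processed without interruption until p j units of work are
   done. *)
Definition list_schedule (m n : nat) (t e : 'I_m -> nat -> R) (p : 'I_n -> R)
    (L : seq 'I_n) (asg : 'I_n -> 'I_m) (S C : 'I_n -> R) : Prop :=
  perm_eq L (enum 'I_n) /\
  forall j : 'I_n,
    let prev := take (index j L) L in
    [/\ (forall i : 'I_m, avail asg C prev (asg j) <= avail asg C prev i),
        S j = avail asg C prev (asg j),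
        S j <= C j &
        work_on (t (asg j)) (e (asg j)) (S j) (C j) (p j)].

End Defs.

From mathcomp Require Import all_boot all_order all_algebra.
From mathcomp Require Import lra.
Set Implicit Arguments. Unset Strict Implicit. Unset Printing Implicit Defensive.
Import Order.TTheory GRing.Theory Num.Theory.
Local Open Scope ring_scope.

(* Fix a time horizon beyond both makespans and let W_i(a, b) be the work
   machine i can process during (a, b]; it is additive in the interval and
   e0 (b - a) <= W_i(a, b) <= b - a.  A feasible schedule processes all jobs
   by its makespan C_opt, so the total work is at most sum_i W_i(0, C_opt).
   A list schedule never leaves a machine idle before it becomes available,
   so if a job j started after C_opt, the jobs listed before j would already
   account for sum_i W_i(0, C_opt) units of work, less than the total.  Hence
   S_j <= C_opt, and since j is processed at rate at least e0,
   C_j - S_j <= p_j / e0 <= C_opt / e0. *)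

Ltac overlap_cases :=
  rewrite /overlap;
  repeat match goal with |- context [Num.max 0 (Num.min ?b ?d - Num.max ?a ?c)] =>
    case: (leP b d) => ?; case: (leP a c) => ? end;
  repeat match goal with |- context [Num.max 0 ?x] => case: (leP 0 x) => ? end;
  lra.

Section Overlap.
Variable R : realFieldType.
Implicit Types a b c d x y z : R.

Lemma overlap_ge0 a b c d : 0 <= overlap a b c d.
Proof. by rewrite /overlap le_max lexx. Qed.

Lemma overlap_splitr a b x y z : x <= y -> y <= z ->
  overlap a b x y + overlap a b y z = overlap a b x z.
Proof. move=> *; overlap_cases. Qed.

Lemma overlap_splitl a b c x y : a <= b -> b <= c ->
  overlap a b x y + overlap b c x y = overlap a c x y.
Proof. move=> *; overlap_cases. Qed.

Lemma overlap_subset a b c d : c <= a -> a <= b -> b <= d -> overlap a b c d = b - a.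
Proof. move=> *; overlap_cases. Qed.

Lemma overlap_eq0 a b c d : b <= c -> overlap a b c d = 0.
Proof. move=> *; overlap_cases. Qed.

Lemma overlapxx a b c : overlap a b c c = 0.
Proof. overlap_cases. Qed.

End Overlap.

Section Capacity.
Variables (R : realFieldType) (e0 : R) (t e : nat -> R).
Hypothesis profile : valid_profile e0 t e.

(* The work the machine can process during (a, b], provided b <= t N. *)
Definition capacity (N : nat) (a b : R) : R :=
  \sum_(k < N) e k * overlap a b (t k) (t k.+1).

Let t0 : t 0%N = 0. Proof. by case: profile. Qed.
Let t_incr k : t k < t k.+1. Proof. by case: profile. Qed.
Let e_bounds k : e0 <= e k <= 1. Proof. by case: profile. Qed.

Let t_nondecr : {homo t : k l / (k <= l)%N >-> k <= l}.
Proof. by apply: Order.NatMonotonyTheory.nondecnP => k; exact: ltW. Qed.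

Lemma capacity_split N a b c : a <= b -> b <= c ->
  capacity N a b + capacity N b c = capacity N a c.
Proof.
move=> ab bc; rewrite -big_split; apply: eq_bigr => k _ /=.
by rewrite -mulrDr overlap_splitl.
Qed.

Lemma capacity_ge0 N a b : 0 <= e0 -> 0 <= capacity N a b.
Proof.
move=> e0_ge0; apply: sumr_ge0 => k _; rewrite mulr_ge0 ?overlap_ge0 //.
by case/andP: (e_bounds k) => /(le_trans e0_ge0).
Qed.

Lemma sum_overlap N a b :
  \sum_(k < N) overlap a b (t k) (t k.+1) = overlap a b 0 (t N).
Proof.
elim: N => [|N IH]; first by rewrite big_ord0 t0 overlapxx.
rewrite big_ord_recr /= IH overlap_splitr //; last exact: ltW.
by rewrite -t0; apply: t_nondecr.
Qed.

Lemma capacity_le N a b : 0 <= a -> a <= b -> b <= t N -> capacity N a b <= b - a.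
Proof.
move=> a_ge0 ab bN; rewrite -(overlap_subset a_ge0 ab bN) -sum_overlap.
apply: ler_sum => k _; rewrite ler_piMl ?overlap_ge0 //.
by case/andP: (e_bounds k).
Qed.

Lemma capacity_ge N a b : 0 <= a -> a <= b -> b <= t N -> e0 * (b - a) <= capacity N a b.
Proof.
move=> a_ge0 ab bN; rewrite -(overlap_subset a_ge0 ab bN) -sum_overlap mulr_sumr.
apply: ler_sum => k _; rewrite ler_wpM2r ?overlap_ge0 //.
by case/andP: (e_bounds k).
Qed.

Lemma capacity_widen N M a b : b <= t N -> (N <= M)%N -> capacity M a b = capacity N a b.
Proof.
move=> bN; elim: M => [|M IH]; first by rewrite leqn0 => /eqP ->.
rewrite leq_eqVlt => /orP [/eqP -> //|NM].
rewrite /capacity big_ord_recr /= -/(capacity M a b) IH // overlap_eq0 ?mulr0 ?addr0 //.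
exact: le_trans bN (t_nondecr _).
Qed.

Lemma work_onE N a b w : work_on t e a b w -> b <= t N -> w = capacity N a b.
Proof.
move=> [M [bM ->]] bN; rewrite -/(capacity M a b).
by rewrite -(capacity_widen a bM (leq_maxl M N)) (capacity_widen a bN (leq_maxr M N)).
Qed.

End Capacity.

Lemma avail_rcons (R : realFieldType) (m n : nat) (asg : 'I_n -> 'I_m) (C : 'I_n -> R)
    s x i :
  avail asg C (rcons s x) i = Num.max (avail asg C s i) (if asg x == i then C x else 0).
Proof.
rewrite /avail; elim: s => [|y s IH] /=.
  by rewrite big_cons !big_nil; case: eqP => _; rewrite ?maxxx // maxC.
by rewrite !big_cons IH; case: ifP => _ //; rewrite maxA.
Qed.

Lemma le_makespan (R : realFieldType) n (C : 'I_n -> R) j : C j <= makespan C.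
Proof. exact: le_bigmax. Qed.

Lemma sum_seq_notin_lt (R : numDomainType) (I : finType) (F : I -> R) (s : seq I) j :
  (forall k, 0 < F k) -> uniq s -> j \notin s -> \sum_(k <- s) F k < \sum_k F k.
Proof.
move=> F_gt0 uniq_s j_notin_s.
rewrite big_uniq // [X in _ < X](bigID (mem s)) /= ltrDl (bigD1 j) //=.
by rewrite ltr_pwDl ?sumr_ge0 // => k _; exact: ltW.
Qed.

Section AdditiveIntervalFunction.
Variables (R : realFieldType) (W : R -> R -> R).
Hypothesis W_split : forall a b c, a <= b -> b <= c -> W a b + W b c = W a c.
Hypothesis W_ge0 : forall a b, 0 <= W a b.

Lemma W_xx a : W a a = 0.
Proof. by have := W_split (lexx a) (lexx a); lra. Qed.

Lemma le_Wr a b c : a <= b -> b <= c -> W a b <= W a c.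
Proof. by move=> ab bc; rewrite -(W_split ab bc) lerDl. Qed.

Lemma sum_W_disjoint_le (I : eqType) (s : seq I) (P : pred I) (S' C' : I -> R) a T :
  uniq s ->
  {in s &, forall j k, P j -> P k -> j != k -> C' j <= S' k \/ C' k <= S' j} ->
  {in s, forall j, P j -> [/\ a <= S' j, S' j <= C' j & C' j <= T]} ->
  \sum_(j <- s | P j) W (S' j) (C' j) <= W a T.
Proof.
elim: s P a T => [|j s IH] P a T; first by rewrite big_nil.
move=> /= /andP[j_notin_s uniq_s] disj bounds.
have in_s k : k \in s -> k \in j :: s by rewrite inE => ->; rewrite orbT.
rewrite big_cons; case: ifP => Pj; last first.
  apply: IH => // [k l ks ls|k ks].
  - exact: disj (in_s _ ks) (in_s _ ls).
  - exact: bounds (in_s _ ks).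
have [aS SC CT] := bounds j (mem_head j s) Pj.
(* Every other interval lies left of [S' j] or right of [C' j]. *)
rewrite (bigID (fun k => C' k <= S' j)) /=.
have before : \sum_(k <- s | P k && (C' k <= S' j)) W (S' k) (C' k) <= W a (S' j).
  apply: IH => // [k l ks ls /andP[Pk _] /andP[Pl _]|k ks /andP[Pk CkSj]].
    exact: disj (in_s _ ks) (in_s _ ls) Pk Pl.
  by have [] := bounds k (in_s _ ks) Pk.
have after : \sum_(k <- s | P k && ~~ (C' k <= S' j)) W (S' k) (C' k) <= W (C' j) T.
  apply: IH => // [k l ks ls /andP[Pk _] /andP[Pl _]|k ks /andP[Pk CkSj]].
    exact: disj (in_s _ ks) (in_s _ ls) Pk Pl.
  have [_ SCk CkT] := bounds k (in_s _ ks) Pk.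
  have jk : j != k by apply: contraNneq j_notin_s => ->.
  by case: (disj _ _ (mem_head j s) (in_s _ ks) Pj Pk jk) => //; rewrite (negbTE CkSj).
rewrite -(W_split aS (le_trans SC CT)) -(W_split SC CT); lra.
Qed.

Lemma W0_avail (m n : nat) (asg : 'I_n -> 'I_m) (S C p : 'I_n -> R) (L : seq 'I_n) i :
  uniq L ->
  (forall j, asg j = i ->
     [/\ S j = avail asg C (take (index j L) L) i, S j <= C j & p j = W (S j) (C j)]) ->
  forall s s2, L = s ++ s2 -> W 0 (avail asg C s i) = \sum_(j <- s | asg j == i) p j.
Proof.
move=> uniq_L ls; elim/last_ind => [|s x IH] s2 defL; first by rewrite /avail !big_nil W_xx.
rewrite cat_rcons in defL.
have avail_ge0 : 0 <= avail asg C s i by exact: bigmax_ge_id.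
rewrite avail_rcons big_rcons -(IH _ defL).
case: eqP => [asg_x|_] /=; last by rewrite addr0 (max_idPl avail_ge0).
have x_notin_s : x \notin s.
  by move: uniq_L; rewrite defL cat_uniq /= => /and3P[_ /norP[]].
have [Sx SCx px] := ls x asg_x.
rewrite defL take_pivot // in Sx.
by rewrite -Sx (max_idPr SCx) px W_split // Sx.
Qed.

End AdditiveIntervalFunction.

Section ListScheduling.
Variables (R : realFieldType) (m n : nat) (e0 : R) (t e : 'I_m -> nat -> R) (p : 'I_n -> R).
Hypothesis e0_ge0 : 0 <= e0.
Hypothesis profiles : forall i, valid_profile e0 (t i) (e i).
Variables (B : R) (N : 'I_m -> nat).
Hypothesis horizon : forall i, B <= t i (N i).

Local Notation W i := (capacity (t i) (e i) (N i)).

Let W_split i a b c : a <= b -> b <= c -> W i a b + W i b c = W i a c.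
Proof. exact: capacity_split. Qed.

Let W_ge0 i a b : 0 <= W i a b.
Proof. exact: (capacity_ge0 (profiles i)). Qed.

Let work_onW i a b w : work_on (t i) (e i) a b w -> b <= B -> w = W i a b.
Proof.
by move=> work bB; apply: (work_onE (profiles i) work); exact: le_trans bB (horizon i).
Qed.

Lemma feasible_work_le asg' S' C' :
  feasible t e p asg' S' C' -> makespan C' <= B ->
  \sum_j p j <= \sum_i W i 0 (makespan C').
Proof.
move=> [sched disj] CB.
rewrite (partition_big asg' xpredT) //=; apply: ler_sum => i _.
have -> : \sum_(j | asg' j == i) p j = \sum_(j | asg' j == i) W i (S' j) (C' j).
  apply: eq_bigr => j /eqP <-; have [_ [_ work]] := sched j.
  exact: work_onW work (le_trans (le_makespan C' j) CB).
apply: (sum_W_disjoint_le (W_split i) (W_ge0 i)) => [|j k _ _ /eqP ji /eqP ki jk|j _ /eqP ji].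
- exact: index_enum_uniq.
- by apply: disj; rewrite ?ji ?ki.
- have [S0 [SC _]] := sched j; split => //; exact: le_makespan.
Qed.

Lemma feasible_size_le asg' S' C' :
  feasible t e p asg' S' C' -> makespan C' <= B -> forall j, p j <= makespan C'.
Proof.
move=> [sched _] CB j; have [S0 [SC work]] := sched j.
have Cj := le_makespan C' j.
have CjB := le_trans Cj CB.
rewrite (work_onW work CjB).
have := capacity_le (profiles (asg' j)) S0 SC (le_trans CjB (horizon _)).
lra.
Qed.

Lemma list_schedule_duration_le L asg S C :
  list_schedule t e p L asg S C -> makespan C <= B ->
  forall j, e0 * (C j - S j) <= p j.
Proof.
move=> [_ ls] CB j; have [_ Sj SC work] := ls j.
have CjB := le_trans (le_makespan C j) CB.
rewrite (work_onW work CjB); apply: (capacity_ge (profiles _)) => //.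
- by rewrite Sj; exact: bigmax_ge_id.
- exact: le_trans CjB (horizon _).
Qed.

Hypothesis p_gt0 : forall j, 0 < p j.

Lemma list_schedule_start_le L asg S C T :
  list_schedule t e p L asg S C -> makespan C <= B -> 0 <= T ->
  \sum_j p j <= \sum_i W i 0 T -> forall j, S j <= T.
Proof.
move=> [permL ls] CB T_ge0 total j; rewrite leNgt; apply/negP => late.
have on_machine i k : asg k = i ->
    [/\ S k = avail asg C (take (index k L) L) i, S k <= C k & p k = W i (S k) (C k)].
  move=> <-; have [_ Sk SCk work] := ls k; split => //.
  exact: work_onW work (le_trans (le_makespan C k) CB).
have uniq_L : uniq L by rewrite (perm_uniq permL) enum_uniq.
have jL : j \in L by rewrite (perm_mem permL) mem_enum.
move: uniq_L ls on_machine; case/splitPr: jL => prev rest uniq_L ls on_machine.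
have := uniq_L; rewrite cat_uniq /= => /and3P[uniq_prev /norP[j_notin_prev _] _].
have busy i : W i 0 T <= \sum_(k <- prev | asg k == i) p k.
  rewrite -(W0_avail (W_split i) uniq_L (on_machine i) (erefl _)).
  apply: (le_Wr (W_split i) (W_ge0 i) T_ge0); apply: le_trans (ltW late) _.
  have [min_asg Sj _ _] := ls j; rewrite take_pivot // in min_asg Sj.
  by rewrite Sj min_asg.
have : \sum_i W i 0 T <= \sum_(k <- prev) p k.
  by rewrite (partition_big asg xpredT) //; apply: ler_sum => i _; exact: busy.
have := sum_seq_notin_lt p_gt0 uniq_prev j_notin_prev.
lra.
Qed.

End ListScheduling.

Theorem theorem2 (R : realFieldType) (m n : nat) (e0 : R)
    (t e : 'I_m -> nat -> R) (p : 'I_n -> R) :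
  0 < e0 -> e0 <= 1 ->
  (forall i, valid_profile e0 (t i) (e i)) ->
  (forall j, 0 < p j) ->
  forall (L : seq 'I_n) (asg : 'I_n -> 'I_m) (S C : 'I_n -> R),
    list_schedule t e p L asg S C ->
    forall (asg' : 'I_n -> 'I_m) (S' C' : 'I_n -> R),
      feasible t e p asg' S' C' ->
      makespan C <= (1 + e0^-1) * makespan C'.
Proof.
move=> e0_gt0 _ profiles p_gt0 L asg S C ls asg' S' C' feas.
set Copt := makespan C'.
pose B := Num.max (makespan C) Copt.
have /fin_all_exists[N horizon] i : exists k, B <= t i k.
  by case: (profiles i) => _ _ /(_ B).
have CB : makespan C <= B by rewrite le_max lexx.
have CoptB : Copt <= B by rewrite le_max lexx orbT.
have Copt_ge0 : 0 <= Copt by exact: bigmax_ge_id.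
have start := list_schedule_start_le (ltW e0_gt0) profiles horizon p_gt0 ls CB Copt_ge0
  (feasible_work_le (ltW e0_gt0) profiles horizon feas CoptB).
have duration := list_schedule_duration_le profiles horizon ls CB.
have p_le := feasible_size_le profiles horizon feas CoptB.
apply/bigmax_leP; split => [|j _]; first by rewrite mulr_ge0 // addr_ge0 // invr_ge0 ltW.
have : C j - S j <= e0^-1 * Copt.
  by rewrite -(ler_pM2l e0_gt0) mulrA mulfV ?gt_eqF // mul1r (le_trans (duration j)) ?p_le.
have := start j; rewrite mulrDl mul1r; lra.
Qed.
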